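(* Let $w\ge 4$ and $u=w-2$. Then $$\sum_{\substack{a+b=w-1\\ a\ge 2,\ b\ge1}} T(a,b,1)=2T(u,2)+4\Big(\zeta(u,\bar1,\bar1)+\zeta(\bar u,1,1)-\zeta(\bar u,1,\bar1)-\zeta(u,\bar1,1)\Big).$$
   Context: Multiple $T$-values: for positive integers $s_1,\dots,s_d$ with $s_1>1$, $T(s_1,\dots,s_d)=\sum_{m_1>\dots>m_d>0,\ m_j\equiv d-j+1\ (\mathrm{mod}\ 2)}\frac{2^d}{m_1^{s_1}\cdots m_d^{s_d}}$. Euler sums: $\zeta(s_1,\dots,s_d;z_1,\dots,z_d)=\sum_{n_1>\dots>n_d>0}\frac{z_1^{n_1}\cdots z_d^{n_d}}{n_1^{s_1}\cdots n_d^{s_d}}$, $z_j\in\{\pm1\}$, convergent iff $(s_1,z_1)\ne(1,1)$; a bar over the $j$-th argument means $z_j=-1$, no bar means $z_j=1$. *)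

From Stdlib Require Import Reals List Arith.
From Coquelicot Require Import Coquelicot.
Open Scope R_scope.

Definition lsum (l : list nat) (f : nat -> R) : R :=
  fold_right (fun n acc => f n + acc) 0 l.

(* An argument of an Euler sum: (s, barred). barred = true means z = -1. *)
Definition sgn (b : bool) (n : nat) : R := if b then (-1) ^ n else 1.

Fixpoint esum_trunc (N : nat) (l : list (nat * bool)) : R :=
  match l with
  | nil => 1
  | (s, b) :: l' =>
      lsum (seq 1 (N - 1))
        (fun n => sgn b n / (INR n ^ s) * esum_trunc n l')
  end.

Definition esum (l : list (nat * bool)) : R :=
  real (Lim_seq (fun N => esum_trunc N l)).

(* Truncated multiple T-value (without the factor 2^d):
   sum over N > m_1 > ... > m_d > 0 with m_j = d - j + 1 (mod 2),
   i.e. the parity of m_j equals the parity of the length of the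
   remaining list (s_j, ..., s_d). *)
Fixpoint T_trunc (N : nat) (l : list nat) : R :=
  match l with
  | nil => 1
  | s :: l' =>
      lsum (seq 1 (N - 1))
        (fun m => if Bool.eqb (Nat.odd m) (Nat.odd (length l))
                  then / (INR m ^ s) * T_trunc m l'
                  else 0)
  end.

Definition Tval (l : list nat) : R :=
  2 ^ (length l) * real (Lim_seq (fun N => T_trunc N l)).

(* Write O(n) for the sum of 1/k over odd k < n.  Unfolding the parity
   conditions, T(a,b,1) is a triple sum over odd m > even k > odd j, and the
   sum over a + b = w - 1 turns the factor m^-a k^-b into a geometric sum,
   equal to (k^-u - m^-u)/(m - k) - 1/(m k^u).  After exchanging the order of
   summation, the first piece gives O(k)^2 = 2 sum_(i<k, i odd) O(i)/i +
   sum_(i<k, i odd) 1/i^2 at even k, and the second a self-convolution of O,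
   evaluated with 1/(pq) = (1/p + 1/q)/(p + q).  The left side becomes
   8 (2 P_e + Q - 2 P_o), where Q = T(u,2)/4 and P_e (resp. P_o) sums
   n^-u sum_(i<n) O(i)/i over even n and odd i (resp. odd n and even i);
   writing (-1)^n as chi_even n - chi_odd n turns the combination of Euler
   sums into 4 (P_e - P_o).  These identities hold exactly for the sums
   truncated at N, up to an error of size O(H_N^2 / N), and every sum
   involved converges by comparison with sum H_n^2 / n^2. *)

From Stdlib Require Import Reals List Arith Lia Lra Psatz.
From Coquelicot Require Import Coquelicot.
Open Scope R_scope.

(** * Finite sums *)

Lemma lsum_cons a l f : lsum (a :: l) f = f a + lsum l f.
Proof. reflexivity. Qed.

Lemma lsum_app l1 l2 f : lsum (l1 ++ l2) f = lsum l1 f + lsum l2 f.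
Proof. induction l1 as [|a l1 IH]; simpl; [ring | rewrite IH; ring]. Qed.

Lemma lsum_ext_in l f g : (forall x, In x l -> f x = g x) -> lsum l f = lsum l g.
Proof.
  induction l as [|a l IH]; simpl; intros H; [reflexivity|].
  rewrite H, IH by auto; reflexivity.
Qed.

Lemma lsum_plus l f g : lsum l (fun x => f x + g x) = lsum l f + lsum l g.
Proof. induction l as [|a l IH]; simpl; [ring | rewrite IH; ring]. Qed.

Lemma lsum_scal l c f : lsum l (fun x => c * f x) = c * lsum l f.
Proof. induction l as [|a l IH]; simpl; [ring | rewrite IH; ring]. Qed.

Lemma lsum_minus l f g : lsum l (fun x => f x - g x) = lsum l f - lsum l g.
Proof. induction l as [|a l IH]; simpl; [ring | rewrite IH; ring]. Qed.

Lemma lsum_const l c : lsum l (fun _ => c) = c * INR (length l).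
Proof.
  induction l as [|a l IH]; simpl length; [simpl; ring|].
  rewrite lsum_cons, IH, S_INR; ring.
Qed.

Lemma lsum_le l f g : (forall x, In x l -> f x <= g x) -> lsum l f <= lsum l g.
Proof.
  induction l as [|a l IH]; simpl; intros H; [lra|].
  assert (f a <= g a) by auto. assert (lsum l f <= lsum l g) by auto. lra.
Qed.

Lemma lsum_nonneg l f : (forall x, In x l -> 0 <= f x) -> 0 <= lsum l f.
Proof.
  intros H; apply Rle_trans with (lsum l (fun _ => 0)); [rewrite lsum_const; lra|].
  now apply lsum_le.
Qed.

Lemma lsum_abs_le l f : Rabs (lsum l f) <= lsum l (fun x => Rabs (f x)).
Proof.
  induction l as [|a l IH]; simpl; [rewrite Rabs_R0; lra|].
  eapply Rle_trans; [apply Rabs_triang | lra].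
Qed.

Lemma lsum_comm l1 l2 (g : nat -> nat -> R) :
  lsum l1 (fun a => lsum l2 (g a)) = lsum l2 (fun k => lsum l1 (fun a => g a k)).
Proof.
  induction l1 as [|a l1 IH]; simpl.
  - induction l2; simpl; [reflexivity | rewrite <- IHl2; ring].
  - rewrite IH, <- lsum_plus; reflexivity.
Qed.

Lemma lsum_seq_shift a k n f :
  lsum (seq (a + k) n) f = lsum (seq a n) (fun i => f (i + k)%nat).
Proof.
  revert a; induction n as [|n IH]; intros a; simpl; [reflexivity|].
  rewrite <- IH; reflexivity.
Qed.

(* [psum N f] is the sum of [f k] over [1 <= k < N]; the inner sums of
   [esum_trunc] and [T_trunc] are convertible to it. *)
Definition psum (N : nat) (f : nat -> R) : R := lsum (seq 1 (N - 1)) f.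

Lemma psum_small N f : (N <= 1)%nat -> psum N f = 0.
Proof. intros H; unfold psum; replace (N - 1)%nat with 0%nat by lia; reflexivity. Qed.

Lemma psum_succ N f : (1 <= N)%nat -> psum (S N) f = psum N f + f N.
Proof.
  intros H; unfold psum.
  replace (S N - 1)%nat with (S (N - 1)) by lia.
  rewrite seq_S, lsum_app; simpl; replace (S (N - 1)) with N by lia; ring.
Qed.

Lemma psum_ext N f g : (forall k, (1 <= k < N)%nat -> f k = g k) -> psum N f = psum N g.
Proof. intros H; apply lsum_ext_in; intros x Hx; apply in_seq in Hx; apply H; lia. Qed.

Lemma psum_plus N f g : psum N (fun k => f k + g k) = psum N f + psum N g.
Proof. apply lsum_plus. Qed.

Lemma psum_scal N c f : psum N (fun k => c * f k) = c * psum N f.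
Proof. apply lsum_scal. Qed.

Lemma psum_minus N f g : psum N (fun k => f k - g k) = psum N f - psum N g.
Proof. apply lsum_minus. Qed.

Lemma psum_const N c : psum N (fun _ => c) = c * INR (N - 1).
Proof. unfold psum; rewrite lsum_const, length_seq; reflexivity. Qed.

Lemma psum_le N f g : (forall k, (1 <= k < N)%nat -> f k <= g k) -> psum N f <= psum N g.
Proof. intros H; apply lsum_le; intros x Hx; apply in_seq in Hx; apply H; lia. Qed.

Lemma psum_nonneg N f : (forall k, (1 <= k < N)%nat -> 0 <= f k) -> 0 <= psum N f.
Proof. intros H; apply lsum_nonneg; intros x Hx; apply in_seq in Hx; apply H; lia. Qed.

Lemma psum_abs_le N f : Rabs (psum N f) <= psum N (fun k => Rabs (f k)).
Proof. apply lsum_abs_le. Qed.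

Lemma psum_le_succ N f : (forall k, (1 <= k)%nat -> 0 <= f k) -> psum N f <= psum (S N) f.
Proof.
  intros H; destruct N as [|N]; [rewrite !psum_small by lia; lra|].
  rewrite (psum_succ (S N)) by lia; assert (0 <= f (S N)) by (apply H; lia); lra.
Qed.

Lemma psum_mono N M f :
  (forall k, (1 <= k)%nat -> 0 <= f k) -> (N <= M)%nat -> psum N f <= psum M f.
Proof.
  intros Hf H; induction H as [|M _ IH]; [lra|].
  eapply Rle_trans; [exact IH | now apply psum_le_succ].
Qed.

Lemma psum_split N K f : (1 <= K <= N)%nat ->
  psum N f = psum K f + lsum (seq K (N - K)) f.
Proof.
  intros H; unfold psum.
  replace (N - 1)%nat with (K - 1 + (N - K))%nat by lia.
  rewrite seq_app, lsum_app; do 3 f_equal; lia.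
Qed.

Lemma psum_window N q g :
  lsum (seq (S q) (N - S q)) g = psum (N - q) (fun p => g (p + q)%nat).
Proof.
  unfold psum; replace (N - q - 1)%nat with (N - S q)%nat by lia.
  apply (lsum_seq_shift 1 q).
Qed.

Lemma psum_rev n f : psum n (fun p => f (n - p)%nat) = psum n f.
Proof.
  induction n as [|n IH]; [reflexivity|].
  destruct n as [|n]; [reflexivity|].
  rewrite (psum_succ (S n) f), <- IH by lia.
  unfold psum; replace (S (S n) - 1)%nat with (S (S n - 1)) by lia.
  change (lsum (1%nat :: seq (1 + 1) (S n - 1)) (fun p => f (S (S n) - p)%nat) =
          lsum (seq 1 (S n - 1)) (fun p => f (S n - p)%nat) + f (S n)).
  rewrite lsum_cons, lsum_seq_shift, Rplus_comm; f_equal.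
  apply lsum_ext_in; intros p Hp; apply in_seq in Hp; f_equal; lia.
Qed.

Lemma psum_triangle_swap N (h : nat -> nat -> R) :
  psum N (fun i => psum i (h i)) =
  psum N (fun j => lsum (seq (S j) (N - S j)) (fun i => h i j)).
Proof.
  induction N as [|N IH]; [reflexivity|].
  destruct N as [|N]; [reflexivity|].
  rewrite psum_succ, IH by lia.
  rewrite (psum_succ (S N)) by lia; replace (S (S N) - S (S N))%nat with 0%nat by lia.
  rewrite Rplus_0_r, <- psum_plus; apply psum_ext; intros j Hj.
  replace (S (S N) - S j)%nat with (S (S N - S j)) by lia.
  rewrite seq_S, lsum_app; simpl; rewrite Rplus_0_r; do 3 f_equal; lia.
Qed.

Lemma psum_antidiagonal M (h : nat -> nat -> R) :
  psum M (fun m => psum m (fun q => h (M - m)%nat q)) =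
  psum M (fun n => psum n (fun q => h (n - q)%nat q)).
Proof.
  rewrite !psum_triangle_swap; apply psum_ext; intros q Hq.
  rewrite !psum_window, <- (psum_rev (M - q)).
  apply psum_ext; intros p Hp; f_equal; lia.
Qed.

(** * Parity and harmonic sums *)

Definition chi_odd (k : nat) : R := if Nat.odd k then 1 else 0.
Definition chi_even (k : nat) : R := if Nat.odd k then 0 else 1.

Lemma chi_odd_bounds k : 0 <= chi_odd k <= 1.
Proof. unfold chi_odd; destruct (Nat.odd k); lra. Qed.

Lemma chi_even_bounds k : 0 <= chi_even k <= 1.
Proof. unfold chi_even; destruct (Nat.odd k); lra. Qed.

Lemma Rabs_le_1_of_bounds c : 0 <= c <= 1 -> Rabs c <= 1.
Proof. intros; rewrite Rabs_pos_eq; lra. Qed.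

Lemma chi_even_add_odd k : chi_even k + chi_odd k = 1.
Proof. unfold chi_even, chi_odd; destruct (Nat.odd k); ring. Qed.

Lemma chi_odd_idem k : chi_odd k * chi_odd k = chi_odd k.
Proof. unfold chi_odd; destruct (Nat.odd k); ring. Qed.

Lemma chi_odd_sub n q : (q <= n)%nat ->
  chi_odd (n - q) = if Nat.odd n then chi_even q else chi_odd q.
Proof.
  intros H; unfold chi_odd, chi_even; rewrite Nat.odd_sub by exact H.
  destruct (Nat.odd n), (Nat.odd q); reflexivity.
Qed.

Lemma chi_odd_add_even p m : Nat.odd m = false -> chi_odd (p + m) = chi_odd p.
Proof.
  intros Hm; unfold chi_odd; rewrite Nat.odd_add, Hm.
  destruct (Nat.odd p); reflexivity.
Qed.

Lemma sgn_true_eq k : sgn true k = chi_even k - chi_odd k.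
Proof.
  unfold sgn, chi_even, chi_odd; induction k as [|k IH]; [simpl; ring|].
  rewrite <- tech_pow_Rmult, IH, Nat.odd_succ, <- Nat.negb_odd.
  destruct (Nat.odd k); simpl; ring.
Qed.

Lemma sgn_false_eq k : sgn false k = chi_even k + chi_odd k.
Proof. unfold sgn, chi_even, chi_odd; destruct (Nat.odd k); ring. Qed.

Lemma INR_pos k : (1 <= k)%nat -> 0 < INR k.
Proof. intros; apply lt_0_INR; lia. Qed.

Lemma inv_INR_pos k : (1 <= k)%nat -> 0 < / INR k.
Proof. intros; apply Rinv_0_lt_compat, INR_pos; lia. Qed.

(* Note the offset: [harm n] is the harmonic number H_(n-1). *)
Definition harm (n : nat) : R := psum n (fun k => / INR k).
Definition odd_harm (n : nat) : R := psum n (fun k => chi_odd k / INR k).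

Lemma harm_succ n : (1 <= n)%nat -> harm (S n) = harm n + / INR n.
Proof. apply psum_succ. Qed.

Lemma odd_harm_succ n : (1 <= n)%nat -> odd_harm (S n) = odd_harm n + chi_odd n / INR n.
Proof. apply psum_succ. Qed.

Lemma harm_nonneg n : 0 <= harm n.
Proof. apply psum_nonneg; intros k Hk; left; apply inv_INR_pos; lia. Qed.

Lemma harm_mono n m : (n <= m)%nat -> harm n <= harm m.
Proof. apply psum_mono; intros k Hk; left; apply inv_INR_pos; lia. Qed.

Lemma harm_le_sqr n : harm n <= harm n ^ 2.
Proof.
  destruct (le_lt_dec n 1) as [H|H]; [unfold harm; rewrite psum_small by lia; lra|].
  assert (1 <= harm n); [|nra].
  replace 1 with (harm 2) by (unfold harm, psum; simpl; rewrite Rinv_1; ring).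
  now apply harm_mono.
Qed.

Lemma odd_harm_nonneg n : 0 <= odd_harm n.
Proof.
  apply psum_nonneg; intros k Hk.
  pose proof (chi_odd_bounds k); pose proof (inv_INR_pos k ltac:(lia)).
  unfold Rdiv; nra.
Qed.

Lemma odd_harm_le_harm n : odd_harm n <= harm n.
Proof.
  apply psum_le; intros k Hk.
  pose proof (chi_odd_bounds k); pose proof (inv_INR_pos k ltac:(lia)).
  unfold Rdiv; nra.
Qed.

Lemma odd_harm_sqr n :
  odd_harm n ^ 2 =
  2 * psum n (fun k => chi_odd k * odd_harm k / INR k) + psum n (fun k => chi_odd k / INR k ^ 2).
Proof.
  induction n as [|n IH]; [unfold odd_harm; rewrite !psum_small by lia; ring|].
  destruct n as [|n]; [unfold odd_harm; rewrite !psum_small by lia; ring|].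
  rewrite odd_harm_succ, !(psum_succ (S n)) by lia.
  pose proof (INR_pos (S n) ltac:(lia)).
  transitivity (odd_harm (S n) ^ 2 + 2 * (chi_odd (S n) * odd_harm (S n) / INR (S n))
                + chi_odd (S n) * chi_odd (S n) / INR (S n) ^ 2); [field; lra|].
  rewrite IH, chi_odd_idem; ring.
Qed.

(** * Convergence criteria *)

Lemma psum_abs_le_harm n f B :
  (forall m, (1 <= m < n)%nat -> Rabs (f m) <= B / INR m) -> Rabs (psum n f) <= harm n * B.
Proof.
  intros H; eapply Rle_trans; [apply psum_abs_le|].
  eapply Rle_trans; [apply psum_le; exact H|].
  unfold Rdiv, harm; rewrite psum_scal; lra.
Qed.

Lemma Rabs_div_pow_le m p q c Z B : (1 <= m)%nat -> (q <= p)%nat ->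
  Rabs c <= 1 -> Rabs Z <= B -> Rabs (c / INR m ^ p * Z) <= B / INR m ^ q.
Proof.
  intros Hm Hqp Hc HZ.
  assert (Hx : 1 <= INR m) by (apply (le_INR 1); lia).
  assert (Hq : 0 < INR m ^ q) by (apply pow_lt; lra).
  assert (Hpq : / INR m ^ p <= / INR m ^ q) by (apply Rinv_le_contravar, Rle_pow; auto).
  assert (Hp : 0 < / INR m ^ p) by (apply Rinv_0_lt_compat, pow_lt; lra).
  unfold Rdiv; rewrite !Rabs_mult, (Rabs_pos_eq (/ _)) by lra.
  pose proof (Rabs_pos c); pose proof (Rabs_pos Z).
  apply Rle_trans with (1 * / INR m ^ p * B); [apply Rmult_le_compat; nra | nra].
Qed.

Lemma ex_finite_lim_seq_ext u v :
  (forall n, u n = v n) -> ex_finite_lim_seq u -> ex_finite_lim_seq v.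
Proof. intros H [l Hl]; exists l; exact (is_lim_seq_ext u v l H Hl). Qed.

Lemma ex_lim_psum_dominated g b M :
  (forall n, (1 <= n)%nat -> Rabs (g n) <= b n) -> (forall N, psum N b <= M) ->
  ex_finite_lim_seq (fun N => psum N g).
Proof.
  intros Hg Hb.
  assert (Hgb : forall n, (1 <= n)%nat -> - b n <= g n <= b n)
    by (intros n Hn; apply Rabs_le_between, Hg, Hn).
  destruct (ex_finite_lim_seq_incr (fun N => psum N (fun n => g n + b n)) (2 * M)) as [l1 H1].
  { intros N; apply psum_le_succ; intros k Hk; specialize (Hgb k Hk); lra. }
  { intros N; rewrite psum_plus.
    assert (psum N g <= psum N b) by (apply psum_le; intros k Hk; apply Hgb; lia).
    specialize (Hb N); lra. }
  destruct (ex_finite_lim_seq_incr (fun N => psum N b) M) as [l2 H2]; [|exact Hb|].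
  { intros N; apply psum_le_succ; intros k Hk; specialize (Hgb k Hk); lra. }
  exists (l1 - l2).
  apply is_lim_seq_ext with (u := fun N => psum N (fun n => g n + b n) - psum N b).
  { intros N; rewrite psum_plus; ring. }
  now apply is_lim_seq_minus'.
Qed.

(* The potential [(h^2 + 2 h + 3) / n], at [h = harm (S n)], decreases by at
   least the next term [harm (S n) ^ 2 / (n + 1) ^ 2] of the series. *)
Lemma harm_sqr_potential_step n h : 1 <= n -> 0 <= h ->
  h ^ 2 / (n + 1) ^ 2 + ((h + / (n + 1)) ^ 2 + 2 * (h + / (n + 1)) + 3) / (n + 1)
  <= (h ^ 2 + 2 * h + 3) / n.
Proof.
  intros Hn Hh.
  assert (Hd : / (n + 1) <= 1) by (rewrite <- Rinv_1; apply Rinv_le_contravar; lra).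
  assert (E : (h ^ 2 + 2 * h + 3) / n
              - (h ^ 2 / (n + 1) ^ 2 + ((h + / (n + 1)) ^ 2 + 2 * (h + / (n + 1)) + 3) / (n + 1))
              = (h ^ 2 + 2 * h + 3 + n * (1 - / (n + 1))) / (n * (n + 1) ^ 2)) by (field; lra).
  assert (0 <= (h ^ 2 + 2 * h + 3 + n * (1 - / (n + 1))) / (n * (n + 1) ^ 2)); [|lra].
  apply Rle_mult_inv_pos; [nra | apply Rmult_lt_0_compat, pow_lt; lra].
Qed.

Lemma psum_harm_sqr_potential N : (1 <= N)%nat ->
  psum (S N) (fun n => harm n ^ 2 / INR n ^ 2)
  + (harm (S N) ^ 2 + 2 * harm (S N) + 3) / INR N <= 6.
Proof.
  intros H; induction H as [|N HN IH].
  - unfold harm, psum; simpl; rewrite Rinv_1; lra.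
  - rewrite (psum_succ (S N)), (harm_succ (S N)) by lia.
    pose proof (harm_sqr_potential_step (INR N) (harm (S N))
                  ltac:(apply (le_INR 1); lia) (harm_nonneg _)).
    rewrite S_INR in *; lra.
Qed.

Lemma psum_harm_sqr_le N : psum N (fun n => harm n ^ 2 / INR n ^ 2) <= 6.
Proof.
  destruct N as [|[|N]]; [rewrite psum_small by lia; lra | rewrite psum_small by lia; lra|].
  pose proof (psum_harm_sqr_potential (S N) ltac:(lia)).
  assert (0 <= (harm (S (S N)) ^ 2 + 2 * harm (S (S N)) + 3) / INR (S N)); [|lra].
  pose proof (harm_nonneg (S (S N))); pose proof (INR_pos (S N) ltac:(lia)).
  apply Rle_mult_inv_pos; nra.
Qed.

Lemma ex_lim_psum_harm_sqr g :
  (forall n, (1 <= n)%nat -> Rabs (g n) <= harm n ^ 2 / INR n ^ 2) ->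
  ex_finite_lim_seq (fun N => psum N g).
Proof. intros H; exact (ex_lim_psum_dominated g _ 6 H psum_harm_sqr_le). Qed.

Lemma ln_succ_ge x : 1 <= x -> / (x + 1) <= ln (x + 1) - ln x.
Proof.
  intros Hx.
  assert (E : 1 + - / (x + 1) = x * / (x + 1)) by (field; lra).
  pose proof (exp_ineq1_le (- / (x + 1))) as Hexp; rewrite E in Hexp.
  assert (0 < / (x + 1)) by (apply Rinv_0_lt_compat; lra).
  apply ln_le in Hexp; [|apply Rmult_lt_0_compat; lra].
  rewrite ln_exp, ln_mult, ln_Rinv in Hexp by lra; lra.
Qed.

Lemma harm_succ_le_1_ln N : (1 <= N)%nat -> harm (S N) <= 1 + ln (INR N).
Proof.
  intros H; induction H as [|N HN IH].
  - unfold harm, psum; simpl; rewrite ln_1, Rinv_1; lra.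
  - rewrite (harm_succ (S N)), S_INR by lia.
    pose proof (ln_succ_ge (INR N) ltac:(apply (le_INR 1); lia)); lra.
Qed.

Lemma ln_le_sqrt_sqrt x : 1 <= x -> ln x <= 4 * sqrt (sqrt x).
Proof.
  intros Hx; set (r := sqrt (sqrt x)).
  assert (Hs : 1 <= sqrt x) by (rewrite <- sqrt_1; apply sqrt_le_1_alt; lra).
  assert (Hr : 1 <= r) by (unfold r; rewrite <- sqrt_1; apply sqrt_le_1_alt; lra).
  assert (E : r ^ 4 = x).
  { unfold r; change 4%nat with (2 * 2)%nat; rewrite pow_mult, !pow2_sqrt; lra. }
  rewrite <- E, ln_pow by lra.
  pose proof (exp_ineq1_le (ln r)); rewrite exp_ln in * by lra; simpl INR; lra.
Qed.

Lemma is_lim_seq_harm_sqr_div : is_lim_seq (fun N => harm N ^ 2 / INR N) 0.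
Proof.
  apply is_lim_seq_le_le with (u := fun _ => 0) (w := fun N => 25 * / sqrt (INR N)).
  2: apply is_lim_seq_const.
  2:{ replace (Finite 0) with (Rbar_mult 25 (Rbar_inv p_infty)) by (simpl; f_equal; ring).
      apply is_lim_seq_scal_l, is_lim_seq_inv; [|discriminate].
      eapply filterlim_comp; [apply is_lim_seq_INR | apply filterlim_sqrt_p]. }
  intros N; destruct N as [|N].
  { unfold harm; rewrite psum_small by lia; simpl; rewrite sqrt_0; unfold Rdiv; rewrite Rinv_0; lra. }
  pose proof (harm_mono (S N) (S (S N)) ltac:(lia)).
  pose proof (harm_succ_le_1_ln (S N) ltac:(lia)); pose proof (harm_nonneg (S N)).
  assert (Hx : 1 <= INR (S N)) by (apply (le_INR 1); lia).
  pose proof (ln_le_sqrt_sqrt _ Hx); set (x := INR (S N)) in *.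
  assert (Hs : 1 <= sqrt x) by (rewrite <- sqrt_1; apply sqrt_le_1_alt; lra).
  assert (Hr : 1 <= sqrt (sqrt x)) by (rewrite <- sqrt_1; apply sqrt_le_1_alt; lra).
  assert (Hh : harm (S N) ^ 2 <= 25 * sqrt x).
  { rewrite <- (pow2_sqrt (sqrt x)) by lra.
    replace (25 * sqrt (sqrt x) ^ 2) with ((5 * sqrt (sqrt x)) ^ 2) by ring.
    apply pow_incr; lra. }
  split; [apply Rle_mult_inv_pos; nra|].
  rewrite <- (sqrt_sqrt x) at 1 by lra; unfold Rdiv.
  rewrite Rinv_mult, <- Rmult_assoc.
  apply Rmult_le_compat_r; [left; apply Rinv_0_lt_compat; lra|].
  apply Rmult_le_reg_r with (sqrt x); [lra|].
  rewrite Rmult_assoc, Rinv_l by lra; lra.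
Qed.

(** * The truncated identities *)

Lemma esum_trunc_cons N s b l :
  esum_trunc N ((s, b) :: l) = psum N (fun n => sgn b n / INR n ^ s * esum_trunc n l).
Proof. reflexivity. Qed.

Lemma T_trunc_cons N s l :
  T_trunc N (s :: l) =
  psum N (fun m => (if Nat.odd (S (length l)) then chi_odd m else chi_even m)
                   / INR m ^ s * T_trunc m l).
Proof.
  change (T_trunc N (s :: l)) with
    (psum N (fun m => if Bool.eqb (Nat.odd m) (Nat.odd (S (length l)))
                      then / INR m ^ s * T_trunc m l else 0)).
  apply psum_ext; intros m _; unfold chi_odd, chi_even.
  destruct (Nat.odd (S (length l))), (Nat.odd m); simpl; unfold Rdiv; ring.
Qed.

Lemma T_trunc_one N : T_trunc N (1%nat :: nil) = odd_harm N.
Proof. rewrite T_trunc_cons; apply psum_ext; intros; simpl; rewrite !Rmult_1_r; reflexivity. Qed.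

Lemma T_trunc_depth3 N a b :
  T_trunc N (a :: b :: 1%nat :: nil) =
  psum N (fun m => chi_odd m / INR m ^ a *
                   psum m (fun k => chi_even k / INR k ^ b * odd_harm k)).
Proof.
  rewrite T_trunc_cons; apply psum_ext; intros m _.
  rewrite T_trunc_cons; f_equal; apply psum_ext; intros k _.
  rewrite T_trunc_one; reflexivity.
Qed.

Lemma lsum_geometric u x y : (1 <= u)%nat -> x <> y ->
  lsum (seq 2 (u - 1)) (fun a => x ^ a * y ^ (u + 1 - a)) =
  x * y * (y ^ u - x ^ u) / (y - x) - x * y ^ u.
Proof.
  intros Hu Hxy.
  assert (Hfull : forall n, lsum (seq 1 n) (fun a => x ^ a * y ^ (n + 1 - a)) * (y - x)
                            = x * y * (y ^ n - x ^ n)).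
  { induction n as [|n IH]; [simpl; ring|].
    rewrite seq_S, lsum_app, lsum_cons.
    rewrite (lsum_ext_in _ _ (fun a => y * (x ^ a * y ^ (n + 1 - a)))).
    2:{ intros a Ha; apply in_seq in Ha.
        replace (S n + 1 - a)%nat with (S (n + 1 - a)) by lia; simpl; ring. }
    rewrite lsum_scal; replace (S n + 1 - (1 + n))%nat with 1%nat by lia.
    replace (1 + n)%nat with (S n) by lia; simpl pow.
    rewrite Rmult_plus_distr_r, Rmult_assoc, IH; simpl lsum; ring. }
  specialize (Hfull u).
  replace (seq 1 u) with (1%nat :: seq 2 (u - 1)) in Hfull
    by (destruct u; [lia | simpl; do 2 f_equal; lia]).
  rewrite lsum_cons, Nat.add_sub, pow_1 in Hfull.
  assert (y - x <> 0) by (intros E; apply Hxy; lra).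
  apply (Rmult_eq_reg_r (y - x)); [|assumption].
  set (L := lsum _ _) in *.
  replace (L * (y - x)) with (x * y * (y ^ u - x ^ u) - x * y ^ u * (y - x))
    by (rewrite <- Hfull; ring).
  field; assumption.
Qed.

(* By 1/((n-q) q) = (1/(n-q) + 1/q)/n; the two parities can only both be odd
   when n is even. *)
Lemma psum_odd_pair n :
  psum n (fun q => chi_odd (n - q) * chi_odd q / (INR (n - q) * INR q)) =
  2 * (chi_even n * odd_harm n / INR n).
Proof.
  assert (Hsplit : forall q, (1 <= q < n)%nat ->
            chi_odd (n - q) * chi_odd q / (INR (n - q) * INR q) =
            chi_even n / INR n * (chi_odd (n - q) / INR (n - q) + chi_odd q / INR q)).
  { intros q Hq; pose proof (INR_pos q ltac:(lia)).
    assert (INR q < INR n) by (apply lt_INR; lia).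
    rewrite chi_odd_sub, minus_INR by lia; unfold chi_odd, chi_even.
    destruct (Nat.odd n), (Nat.odd q); field; lra. }
  rewrite (psum_ext _ _ _ Hsplit), psum_scal, psum_plus.
  rewrite (psum_rev n (fun p => chi_odd p / INR p)); fold (odd_harm n).
  unfold Rdiv; ring.
Qed.

(* For odd M, chi_even m = chi_odd (M - m): the left side runs over pairs of
   odd numbers p = M - m, q with p + q < M, which are regrouped by n = p + q. *)
Lemma odd_harm_convolution M : Nat.odd M = true ->
  psum M (fun m => chi_even m * odd_harm m / (INR M - INR m)) =
  2 * psum M (fun n => chi_even n * odd_harm n / INR n).
Proof.
  intros HM.
  transitivity (psum M (fun m => psum m (fun q =>
    chi_odd (M - m) * chi_odd q / (INR (M - m) * INR q)))).
  { apply psum_ext; intros m Hm.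
    assert (INR m < INR M) by (apply lt_INR; lia).
    rewrite chi_odd_sub, HM, minus_INR by lia.
    transitivity (chi_even m / (INR M - INR m) * odd_harm m); [unfold Rdiv; ring|].
    unfold odd_harm; rewrite <- psum_scal; apply psum_ext; intros q Hq.
    pose proof (INR_pos q ltac:(lia)); field; lra. }
  rewrite (psum_antidiagonal M (fun p q => chi_odd p * chi_odd q / (INR p * INR q))).
  rewrite <- psum_scal; apply psum_ext; intros n _.
  apply psum_odd_pair.
Qed.

Lemma odd_harm_window N m : Nat.odd m = false -> (1 <= m < N)%nat ->
  lsum (seq (S m) (N - S m)) (fun i => chi_odd i * (/ (INR i - INR m) - / INR i)) =
  odd_harm m + odd_harm (N - m) - odd_harm N.
Proof.
  intros Hm HmN.
  transitivity (lsum (seq (S m) (N - S m)) (fun i => chi_odd i / (INR i - INR m))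
                - lsum (seq (S m) (N - S m)) (fun i => chi_odd i / INR i));
    [rewrite <- lsum_minus; apply lsum_ext_in; intros; unfold Rdiv; ring|].
  assert (Hshift : lsum (seq (S m) (N - S m)) (fun i => chi_odd i / (INR i - INR m))
                   = odd_harm (N - m)).
  { rewrite psum_window; apply psum_ext; intros p _.
    rewrite chi_odd_add_even, plus_INR by exact Hm; f_equal; ring. }
  assert (Htail : odd_harm N = odd_harm m + lsum (seq (S m) (N - S m)) (fun i => chi_odd i / INR i)).
  { unfold odd_harm at 1; rewrite (psum_split N (S m)) by lia; fold (odd_harm (S m)).
    rewrite odd_harm_succ by lia; unfold chi_odd; rewrite Hm; unfold Rdiv; ring. }
  rewrite Hshift, Htail; ring.
Qed.

Lemma esum_trunc_one_diff m :
  esum_trunc m ((1%nat, true) :: nil) - esum_trunc m ((1%nat, false) :: nil) = -2 * odd_harm m.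
Proof.
  rewrite !esum_trunc_cons, <- psum_minus; unfold odd_harm; rewrite <- psum_scal.
  apply psum_ext; intros k Hk; pose proof (INR_pos k ltac:(lia)).
  simpl esum_trunc; rewrite pow_1, sgn_true_eq, sgn_false_eq; field; lra.
Qed.

Lemma esum_trunc_two_diff b n :
  esum_trunc n ((1%nat, b) :: (1%nat, true) :: nil)
  - esum_trunc n ((1%nat, b) :: (1%nat, false) :: nil) =
  -2 * psum n (fun k => sgn b k * odd_harm k / INR k).
Proof.
  rewrite !esum_trunc_cons, <- psum_minus, <- psum_scal; apply psum_ext; intros k _.
  rewrite <- Rmult_minus_distr_l, esum_trunc_one_diff, pow_1; unfold Rdiv; ring.
Qed.

Lemma psum_sgn_odd_harm b n :
  psum n (fun k => sgn b k * odd_harm k / INR k) =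
  psum n (fun k => chi_even k * odd_harm k / INR k)
  + (if b then -1 else 1) * psum n (fun k => chi_odd k * odd_harm k / INR k).
Proof.
  rewrite <- psum_scal, <- psum_plus; apply psum_ext; intros k _.
  destruct b; rewrite ?sgn_true_eq, ?sgn_false_eq; unfold Rdiv; ring.
Qed.

Section Decomposition.

Variable u : nat.
Hypothesis Hu : (2 <= u)%nat.

Definition even_weight (k : nat) : R := chi_even k * odd_harm k / INR k ^ u.

Definition P_even (N : nat) : R :=
  psum N (fun n => chi_even n / INR n ^ u * psum n (fun k => chi_odd k * odd_harm k / INR k)).
Definition P_odd (N : nat) : R :=
  psum N (fun n => chi_odd n / INR n ^ u * psum n (fun k => chi_even k * odd_harm k / INR k)).
Definition Q_trunc (N : nat) : R :=
  psum N (fun n => chi_even n / INR n ^ u * psum n (fun k => chi_odd k / INR k ^ 2)).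
Definition R_err (N : nat) : R :=
  psum N (fun k => even_weight k * (odd_harm N - odd_harm (N - k))).

Lemma T_trunc_u_2 N : T_trunc N (u :: 2%nat :: nil) = Q_trunc N.
Proof.
  rewrite T_trunc_cons; apply psum_ext; intros n _.
  rewrite T_trunc_cons; f_equal; apply psum_ext; intros k _.
  simpl T_trunc; rewrite Rmult_1_r; reflexivity.
Qed.

Lemma T_sum_eq N :
  lsum (seq 2 (u - 1)) (fun a => T_trunc N (a :: (u + 1 - a)%nat :: 1%nat :: nil)) =
  psum N (fun m => chi_odd m * psum m (fun k => even_weight k * (/ (INR m - INR k) - / INR m)))
  - psum N (fun m => chi_odd m / INR m ^ u *
                     psum m (fun k => chi_even k * odd_harm k / (INR m - INR k))).
Proof.
  rewrite (lsum_ext_in _ _ _ (fun a _ => T_trunc_depth3 N a (u + 1 - a))).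
  unfold psum at 1; rewrite lsum_comm; fold (psum N).
  rewrite <- psum_minus; apply psum_ext; intros m Hm.
  rewrite (lsum_ext_in _ _ (fun a => psum m (fun k =>
             chi_odd m * chi_even k * odd_harm k * ((/ INR m) ^ a * (/ INR k) ^ (u + 1 - a))))).
  2:{ intros a _; rewrite <- psum_scal; apply psum_ext; intros k _.
      rewrite !pow_inv; unfold Rdiv; ring. }
  unfold psum at 1; rewrite lsum_comm; fold (psum m).
  rewrite <- !psum_scal, <- psum_minus; apply psum_ext; intros k Hk.
  assert (INR k < INR m) by (apply lt_INR; lia).
  pose proof (INR_pos k ltac:(lia)).
  assert (Hinv : / INR m <> / INR k) by (intros E; apply Rinv_eq_reg in E; lra).
  rewrite lsum_scal, (lsum_geometric u _ _ ltac:(lia) Hinv).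
  unfold even_weight; rewrite !pow_inv.
  assert (INR k ^ u <> 0) by (apply pow_nonzero; lra).
  assert (INR m ^ u <> 0) by (apply pow_nonzero; lra).
  field; repeat split; lra.
Qed.

Lemma psum_odd_harm_convolution N :
  psum N (fun m => chi_odd m / INR m ^ u *
                   psum m (fun k => chi_even k * odd_harm k / (INR m - INR k))) =
  2 * P_odd N.
Proof.
  unfold P_odd; rewrite <- psum_scal; apply psum_ext; intros m _.
  destruct (Nat.odd m) eqn:Hm; [rewrite odd_harm_convolution by exact Hm|];
    unfold chi_odd; rewrite Hm; unfold Rdiv; ring.
Qed.

Lemma even_weight_sum_eq N :
  psum N (fun k => even_weight k * odd_harm k) = 2 * P_even N + Q_trunc N.
Proof.
  unfold P_even, Q_trunc; rewrite <- psum_scal, <- psum_plus; apply psum_ext; intros k _.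
  transitivity (chi_even k / INR k ^ u * odd_harm k ^ 2); [unfold even_weight, Rdiv; ring|].
  rewrite odd_harm_sqr; ring.
Qed.

Lemma psum_even_weight_window N :
  psum N (fun m => chi_odd m * psum m (fun k => even_weight k * (/ (INR m - INR k) - / INR m))) =
  psum N (fun k => even_weight k * odd_harm k) - R_err N.
Proof.
  transitivity (psum N (fun m => psum m (fun k =>
                  even_weight k * (chi_odd m * (/ (INR m - INR k) - / INR m))))).
  { apply psum_ext; intros m _; rewrite <- psum_scal; apply psum_ext; intros; ring. }
  rewrite psum_triangle_swap; unfold R_err; rewrite <- psum_minus.
  apply psum_ext; intros k Hk; rewrite lsum_scal.
  destruct (Nat.odd k) eqn:Hodd.
  - unfold even_weight, chi_even; rewrite Hodd; unfold Rdiv; ring.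
  - rewrite (odd_harm_window N k Hodd) by lia; ring.
Qed.

Lemma T_sum_decomp N :
  lsum (seq 2 (u - 1)) (fun a => T_trunc N (a :: (u + 1 - a)%nat :: 1%nat :: nil)) =
  2 * P_even N + Q_trunc N - 2 * P_odd N - R_err N.
Proof.
  rewrite T_sum_eq, psum_even_weight_window, even_weight_sum_eq, psum_odd_harm_convolution; ring.
Qed.

Lemma esum_combination_trunc N :
  esum_trunc N ((u, false) :: (1%nat, true) :: (1%nat, true) :: nil)
  + esum_trunc N ((u, true) :: (1%nat, false) :: (1%nat, false) :: nil)
  - esum_trunc N ((u, true) :: (1%nat, false) :: (1%nat, true) :: nil)
  - esum_trunc N ((u, false) :: (1%nat, true) :: (1%nat, false) :: nil)
  = 4 * (P_even N - P_odd N).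
Proof.
  rewrite !esum_trunc_cons, <- psum_plus, <- !psum_minus.
  unfold P_even, P_odd; rewrite <- psum_minus, <- psum_scal; apply psum_ext; intros n _.
  pose proof (esum_trunc_two_diff true n) as Dt.
  pose proof (esum_trunc_two_diff false n) as Df.
  rewrite !psum_sgn_odd_harm in *.
  set (E := psum n (fun k => chi_even k * odd_harm k / INR k)) in *.
  set (D := psum n (fun k => chi_odd k * odd_harm k / INR k)) in *.
  set (Att := esum_trunc n ((1%nat, true) :: (1%nat, true) :: nil)) in *.
  set (Atf := esum_trunc n ((1%nat, true) :: (1%nat, false) :: nil)) in *.
  set (Aft := esum_trunc n ((1%nat, false) :: (1%nat, true) :: nil)) in *.
  set (Aff := esum_trunc n ((1%nat, false) :: (1%nat, false) :: nil)) in *.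
  replace Att with (Atf - 2 * (E - D)) by lra.
  replace Aff with (Aft + 2 * (E + D)) by lra.
  rewrite sgn_true_eq; unfold sgn; replace (chi_even n) with (1 - chi_odd n)
    by (pose proof (chi_even_add_odd n); lra).
  unfold Rdiv; ring.
Qed.

End Decomposition.

(** * Convergence and limits *)

Lemma Rabs_sgn_le b k : Rabs (sgn b k) <= 1.
Proof. unfold sgn; destruct b; [rewrite pow_1_abs | rewrite Rabs_R1]; lra. Qed.

Lemma Rabs_div_pow_inv_le m p c Z B : (1 <= m)%nat -> (1 <= p)%nat ->
  Rabs c <= 1 -> Rabs Z <= B -> Rabs (c / INR m ^ p * Z) <= B / INR m.
Proof.
  intros; replace (B / INR m) with (B / INR m ^ 1) by (rewrite pow_1; reflexivity).
  now apply Rabs_div_pow_le.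
Qed.

Lemma psum_abs_le_harm_sqr n f :
  (forall m, (1 <= m < n)%nat -> Rabs (f m) <= harm n / INR m) -> Rabs (psum n f) <= harm n ^ 2.
Proof. intros H; replace (harm n ^ 2) with (harm n * harm n) by ring; now apply psum_abs_le_harm. Qed.

Lemma Rabs_odd_harm_le_harm m n : (m <= n)%nat -> Rabs (odd_harm m) <= harm n.
Proof.
  intros H; rewrite Rabs_pos_eq by apply odd_harm_nonneg.
  eapply Rle_trans; [apply odd_harm_le_harm | now apply harm_mono].
Qed.

Lemma Rabs_chi_odd_harm_div_le c m n : 0 <= c <= 1 -> (1 <= m <= n)%nat ->
  Rabs (c * odd_harm m / INR m) <= harm n / INR m.
Proof.
  intros Hc Hm; pose proof (inv_INR_pos m ltac:(lia)).
  pose proof (odd_harm_nonneg m); pose proof (odd_harm_le_harm m).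
  pose proof (harm_mono m n ltac:(lia)).
  unfold Rdiv; rewrite Rabs_pos_eq by (apply Rmult_le_pos; nra).
  apply Rmult_le_compat_r; nra.
Qed.

Lemma ex_lim_psum_nested p c Y : (2 <= p)%nat ->
  (forall n, Rabs (c n) <= 1) -> (forall n, (1 <= n)%nat -> Rabs (Y n) <= harm n ^ 2) ->
  ex_finite_lim_seq (fun N => psum N (fun n => c n / INR n ^ p * Y n)).
Proof. intros Hp Hc HY; apply ex_lim_psum_harm_sqr; intros n Hn; apply Rabs_div_pow_le; auto. Qed.

Lemma Rabs_inv_pow_le k p c : (1 <= k)%nat -> (1 <= p)%nat -> Rabs c <= 1 ->
  Rabs (c / INR k ^ p) <= 1 / INR k.
Proof.
  intros; rewrite <- (Rmult_1_r (c / _)).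
  apply Rabs_div_pow_inv_le; auto; rewrite Rabs_R1; lra.
Qed.

Lemma ex_lim_P_even u : (2 <= u)%nat -> ex_finite_lim_seq (P_even u).
Proof.
  intros Hu; apply ex_lim_psum_nested; [exact Hu | intros; apply Rabs_le_1_of_bounds, chi_even_bounds|].
  intros n _; apply psum_abs_le_harm_sqr; intros m Hm.
  apply Rabs_chi_odd_harm_div_le; [apply chi_odd_bounds | lia].
Qed.

Lemma ex_lim_P_odd u : (2 <= u)%nat -> ex_finite_lim_seq (P_odd u).
Proof.
  intros Hu; apply ex_lim_psum_nested; [exact Hu | intros; apply Rabs_le_1_of_bounds, chi_odd_bounds|].
  intros n _; apply psum_abs_le_harm_sqr; intros m Hm.
  apply Rabs_chi_odd_harm_div_le; [apply chi_even_bounds | lia].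
Qed.

Lemma ex_lim_Q_trunc u : (2 <= u)%nat -> ex_finite_lim_seq (Q_trunc u).
Proof.
  intros Hu; apply ex_lim_psum_nested; [exact Hu | intros; apply Rabs_le_1_of_bounds, chi_even_bounds|].
  intros n _; eapply Rle_trans; [apply psum_abs_le_harm with (B := 1)|].
  - intros k Hk; apply Rabs_inv_pow_le; [lia | lia | apply Rabs_le_1_of_bounds, chi_odd_bounds].
  - rewrite Rmult_1_r; apply harm_le_sqr.
Qed.

Lemma ex_lim_T_depth3 a b : (2 <= a)%nat -> (1 <= b)%nat ->
  ex_finite_lim_seq (fun N => T_trunc N (a :: b :: 1%nat :: nil)).
Proof.
  intros Ha Hb; eapply ex_finite_lim_seq_ext; [intros N; symmetry; apply T_trunc_depth3|].
  apply ex_lim_psum_nested; [exact Ha | intros; apply Rabs_le_1_of_bounds, chi_odd_bounds|].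
  intros n _; apply psum_abs_le_harm_sqr; intros m Hm.
  apply Rabs_div_pow_inv_le; [lia | exact Hb | apply Rabs_le_1_of_bounds, chi_even_bounds|].
  apply Rabs_odd_harm_le_harm; lia.
Qed.

Lemma ex_lim_esum_depth3 u b1 b2 b3 : (2 <= u)%nat ->
  ex_finite_lim_seq (fun N => esum_trunc N ((u, b1) :: (1%nat, b2) :: (1%nat, b3) :: nil)).
Proof.
  intros Hu; apply ex_lim_psum_nested; [exact Hu | intros; apply Rabs_sgn_le|].
  intros n _; apply psum_abs_le_harm_sqr; intros m Hm.
  apply Rabs_div_pow_inv_le; [lia | lia | apply Rabs_sgn_le|].
  eapply Rle_trans; [apply psum_abs_le_harm with (B := 1)|].
  - intros k Hk; rewrite Rmult_1_r.
    apply Rabs_inv_pow_le; [lia | lia | apply Rabs_sgn_le].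
  - rewrite Rmult_1_r; apply harm_mono; lia.
Qed.

Lemma odd_harm_tail_bounds N m : (1 <= m < N)%nat ->
  0 <= odd_harm N - odd_harm (N - m) <= harm N /\
  ((2 * m <= N)%nat -> odd_harm N - odd_harm (N - m) <= 2 * INR m / INR N).
Proof.
  intros Hm.
  assert (Htail : forall f, psum N f - psum (N - m) f = lsum (seq (N - m) m) f).
  { intros f; rewrite (psum_split N (N - m)) by lia; replace (N - (N - m))%nat with m by lia; ring. }
  assert (Hrange : forall p, In p (seq (N - m) m) -> (N - m <= p < N)%nat)
    by (intros p Hp; apply in_seq in Hp; lia).
  unfold odd_harm; rewrite Htail; split; [split|].
  - apply lsum_nonneg; intros p Hp; specialize (Hrange p Hp).
    pose proof (chi_odd_bounds p); pose proof (inv_INR_pos p ltac:(lia)); unfold Rdiv; nra.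
  - pose proof (harm_nonneg (N - m)).
    assert (lsum (seq (N - m) m) (fun p => chi_odd p / INR p) <= harm N - harm (N - m));
      [unfold harm; rewrite Htail | lra].
    apply lsum_le; intros p Hp; specialize (Hrange p Hp).
    pose proof (chi_odd_bounds p); pose proof (inv_INR_pos p ltac:(lia)); unfold Rdiv; nra.
  - intros H2m.
    replace (2 * INR m / INR N) with (2 / INR N * INR (length (seq (N - m) m)))
      by (rewrite length_seq; unfold Rdiv; ring).
    rewrite <- lsum_const; apply lsum_le; intros p Hp; specialize (Hrange p Hp).
    pose proof (chi_odd_bounds p); pose proof (INR_pos p ltac:(lia)); pose proof (INR_pos N ltac:(lia)).
    assert (INR N <= 2 * INR p) by (replace 2 with (INR 2) by reflexivity; rewrite <- mult_INR; apply le_INR; lia).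
    apply Rle_trans with (/ INR p); [unfold Rdiv; pose proof (inv_INR_pos p ltac:(lia)); nra|].
    apply Rle_trans with (/ (INR N / 2)); [apply Rinv_le_contravar; lra | right; field; lra].
Qed.

Lemma even_weight_bounds u m N : (2 <= u)%nat -> (1 <= m <= N)%nat ->
  0 <= even_weight u m <= harm N / INR m ^ 2.
Proof.
  intros Hu Hm; unfold even_weight.
  pose proof (chi_even_bounds m); pose proof (odd_harm_nonneg m); pose proof (odd_harm_le_harm m).
  pose proof (harm_mono m N ltac:(lia)).
  assert (Hx : 1 <= INR m) by (apply (le_INR 1); lia).
  assert (Hp : 0 < / INR m ^ u) by (apply Rinv_0_lt_compat, pow_lt; lra).
  assert (/ INR m ^ u <= / INR m ^ 2)
    by (apply Rinv_le_contravar; [apply pow_lt; lra | apply Rle_pow; [lra | exact Hu]]).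
  unfold Rdiv; split; [apply Rmult_le_pos; nra|].
  apply Rmult_le_compat; nra.
Qed.

Lemma R_err_term_bounds u N m : (2 <= u)%nat -> (1 <= m < N)%nat ->
  0 <= even_weight u m * (odd_harm N - odd_harm (N - m))
  <= 2 * harm N / (INR N * INR m) + 4 * (harm N ^ 2 / INR N ^ 2).
Proof.
  intros Hu Hm.
  destruct (odd_harm_tail_bounds N m Hm) as [[T0 T1] T2].
  destruct (even_weight_bounds u m N Hu ltac:(lia)) as [W0 W1].
  assert (Ha : 1 <= INR m) by (apply (le_INR 1); lia).
  assert (Han : INR m < INR N) by (apply lt_INR; lia).
  pose proof (harm_nonneg N).
  set (a := INR m) in *; set (n := INR N) in *; set (h := harm N) in *.
  set (W := even_weight u m) in *; set (R := odd_harm N - odd_harm (N - m)) in *.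
  assert (B1 : 0 <= 2 * h / (n * a)) by (apply Rle_mult_inv_pos; nra).
  assert (B2 : 0 <= 4 * (h ^ 2 / n ^ 2)) by (apply Rmult_le_pos, Rle_mult_inv_pos; nra).
  split; [nra|].
  destruct (le_lt_dec (2 * m) N) as [Hsmall|Hlarge].
  - specialize (T2 Hsmall).
    assert (W * R <= h / a ^ 2 * (2 * a / n)) by (apply Rmult_le_compat; lra).
    replace (h / a ^ 2 * (2 * a / n)) with (2 * h / (n * a)) in * by (field; lra); lra.
  - assert (n < 2 * a) by (unfold n, a; replace 2 with (INR 2) by reflexivity;
                           rewrite <- mult_INR; apply lt_INR; lia).
    assert (W * R <= h / a ^ 2 * h) by (apply Rmult_le_compat; lra).
    assert (h / a ^ 2 * h <= 4 * (h ^ 2 / n ^ 2)); [|lra].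
    replace (h / a ^ 2 * h) with (h ^ 2 * / a ^ 2) by (field; lra).
    replace (4 * (h ^ 2 / n ^ 2)) with (h ^ 2 * / (n / 2) ^ 2) by (field; lra).
    apply Rmult_le_compat_l; [nra|].
    apply Rinv_le_contravar; [apply pow_lt; lra | apply pow_incr; lra].
Qed.

Lemma R_err_bounds u N : (2 <= u)%nat -> 0 <= R_err u N <= 6 * (harm N ^ 2 / INR N).
Proof.
  intros Hu; unfold R_err; split.
  { apply psum_nonneg; intros m Hm; apply (R_err_term_bounds u N m Hu Hm). }
  destruct (le_lt_dec N 1) as [HN|HN].
  { rewrite psum_small by exact HN; unfold harm; rewrite psum_small by exact HN; lra. }
  eapply Rle_trans; [apply psum_le; intros m Hm; apply (R_err_term_bounds u N m Hu Hm)|].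
  rewrite psum_plus, psum_const.
  rewrite (psum_ext N _ (fun m => 2 * harm N * / INR N * / INR m))
    by (intros; unfold Rdiv; rewrite Rinv_mult; ring).
  rewrite psum_scal; fold (harm N).
  assert (0 < INR N) by (apply INR_pos; lia).
  assert (INR (N - 1) <= INR N) by (apply le_INR; lia).
  assert (0 <= harm N ^ 2 / INR N ^ 2) by (apply Rle_mult_inv_pos; [nra | apply pow_lt; lra]).
  assert (harm N ^ 2 / INR N ^ 2 * INR (N - 1) <= harm N ^ 2 / INR N).
  { replace (harm N ^ 2 / INR N) with (harm N ^ 2 / INR N ^ 2 * INR N) by (field; lra).
    apply Rmult_le_compat_l; lra. }
  replace (2 * harm N * / INR N * harm N) with (2 * (harm N ^ 2 / INR N)) by (field; lra).
  lra.
Qed.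

Lemma is_lim_seq_R_err u : (2 <= u)%nat -> is_lim_seq (R_err u) 0.
Proof.
  intros Hu.
  apply is_lim_seq_le_le with (u := fun _ => 0) (w := fun N => 6 * (harm N ^ 2 / INR N)).
  - intros N; apply R_err_bounds, Hu.
  - apply is_lim_seq_const.
  - replace (Finite 0) with (Rbar_mult 6 0) by (simpl; f_equal; ring).
    apply is_lim_seq_scal_l, is_lim_seq_harm_sqr_div.
Qed.

Lemma is_lim_seq_real_Lim v : ex_finite_lim_seq v -> is_lim_seq v (real (Lim_seq v)).
Proof. intros [l Hl]; rewrite (is_lim_seq_unique _ _ Hl); exact Hl. Qed.

Lemma real_Lim_seq_eq v (l : R) : is_lim_seq v l -> real (Lim_seq v) = l.
Proof. intros H; rewrite (is_lim_seq_unique _ _ H); reflexivity. Qed.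

Lemma is_lim_seq_eq v (a b : R) : is_lim_seq v a -> is_lim_seq v b -> a = b.
Proof. intros Ha Hb; apply real_Lim_seq_eq in Ha, Hb; congruence. Qed.

Lemma is_lim_seq_lsum l (f : nat -> nat -> R) (g : nat -> R) :
  (forall a, In a l -> is_lim_seq (f a) (g a)) ->
  is_lim_seq (fun N => lsum l (fun a => f a N)) (lsum l g).
Proof.
  induction l as [|a l IH]; intros H; [apply is_lim_seq_const|].
  apply is_lim_seq_plus'; [apply H; left | apply IH; intros; apply H; right]; auto.
Qed.

Lemma T_sum_value u : (2 <= u)%nat ->
  lsum (seq 2 (u - 1)) (fun a => Tval (a :: (u + 1 - a)%nat :: 1%nat :: nil)) =
  8 * (2 * real (Lim_seq (P_even u)) + real (Lim_seq (Q_trunc u))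
       - 2 * real (Lim_seq (P_odd u))).
Proof.
  intros Hu; unfold Tval; simpl length; rewrite lsum_scal.
  replace (2 ^ 3) with 8 by ring; f_equal.
  pose proof (is_lim_seq_real_Lim _ (ex_lim_P_even u Hu)) as Pe.
  pose proof (is_lim_seq_real_Lim _ (ex_lim_P_odd u Hu)) as Po.
  pose proof (is_lim_seq_real_Lim _ (ex_lim_Q_trunc u Hu)) as Q.
  apply (is_lim_seq_eq (fun N => lsum (seq 2 (u - 1))
           (fun a => T_trunc N (a :: (u + 1 - a)%nat :: 1%nat :: nil)))).
  - apply is_lim_seq_lsum; intros a Ha; apply in_seq in Ha.
    apply is_lim_seq_real_Lim, ex_lim_T_depth3; lia.
  - eapply is_lim_seq_ext; [intros N; symmetry; apply (T_sum_decomp u Hu)|].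
    rewrite <- (Rminus_0_r (_ - _)).
    apply is_lim_seq_minus'; [|exact (is_lim_seq_R_err u Hu)].
    apply is_lim_seq_minus'; [apply is_lim_seq_plus'; [|exact Q]|];
      apply (is_lim_seq_scal_l _ 2 (Finite _)); assumption.
Qed.

Lemma Tval_u_2 u : Tval (u :: 2%nat :: nil) = 4 * real (Lim_seq (Q_trunc u)).
Proof.
  unfold Tval; simpl length; rewrite (Lim_seq_ext _ _ (T_trunc_u_2 u)); f_equal; ring.
Qed.

Lemma esum_combination u : (2 <= u)%nat ->
  esum ((u, false) :: (1%nat, true) :: (1%nat, true) :: nil)
  + esum ((u, true) :: (1%nat, false) :: (1%nat, false) :: nil)
  - esum ((u, true) :: (1%nat, false) :: (1%nat, true) :: nil)
  - esum ((u, false) :: (1%nat, true) :: (1%nat, false) :: nil)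
  = 4 * (real (Lim_seq (P_even u)) - real (Lim_seq (P_odd u))).
Proof.
  intros Hu; unfold esum.
  pose proof (fun b1 b2 b3 => is_lim_seq_real_Lim _ (ex_lim_esum_depth3 u b1 b2 b3 Hu)) as E.
  eapply is_lim_seq_eq.
  - apply is_lim_seq_minus'; [apply is_lim_seq_minus'; [apply is_lim_seq_plus'|]|]; apply E.
  - eapply is_lim_seq_ext; [intros N; symmetry; apply esum_combination_trunc|].
    apply (is_lim_seq_scal_l _ 4 (Finite _)), is_lim_seq_minus';
      apply is_lim_seq_real_Lim; [apply ex_lim_P_even | apply ex_lim_P_odd]; exact Hu.
Qed.

Theorem corollary5p3 (w : nat) (hw : (4 <= w)%nat) :
  let u := (w - 2)%nat in
  lsum (seq 2 (w - 3)) (fun a => Tval (a :: (w - 1 - a)%nat :: 1%nat :: nil))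
  = 2 * Tval (u :: 2%nat :: nil)
    + 4 * ( esum ((u, false) :: (1%nat, true) :: (1%nat, true) :: nil)
          + esum ((u, true) :: (1%nat, false) :: (1%nat, false) :: nil)
          - esum ((u, true) :: (1%nat, false) :: (1%nat, true) :: nil)
          - esum ((u, false) :: (1%nat, true) :: (1%nat, false) :: nil)).
Proof.
  intros u.
  assert (Hu : (2 <= u)%nat) by (unfold u; lia).
  replace (w - 3)%nat with (u - 1)%nat by (unfold u; lia).
  rewrite (lsum_ext_in _ _ (fun a => Tval (a :: (u + 1 - a)%nat :: 1%nat :: nil)))
    by (intros a _; do 3 f_equal; unfold u; lia).
  rewrite T_sum_value, Tval_u_2, esum_combination by exact Hu; ring.
Qed.
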